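(* Let $M_{2,2}$ be the lattice obtained from $A_1^{\oplus 12}=\langle v_1,\dots,v_{12}\rangle$ ($v_i^2=-2$, $v_i\cdot v_j=0$ for $i\ne j$) by adding the generators $(v_1+\dots+v_8)/2$ and $(v_5+\dots+v_{12})/2$, with discriminant group $A_{M_{2,2}}$ and discriminant form $q:A_{M_{2,2}}\to\mathbb Q/2\mathbb Z$. Consider the equivalence relation on $A_{M_{2,2}}$ where $r\sim s$ if $\bar\psi(r)=s$ for the isometry $\bar\psi$ of $A_{M_{2,2}}$ induced by some $\psi\in O(M_{2,2})$. Then the non-trivial equivalence classes, recorded as triples (order of the element, value of $q$, cardinality of the class), are exactly: $(2,0,54)$, $(2,0,1)$, $(2,1/2,64)$, $(2,1,54)$, $(2,1,18)$, $(2,3/2,64)$.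
   Context: For an even lattice $S$, $A_S=S^\vee/S$ and $q_S(x+S)=x^2\bmod 2\mathbb Z$. The lattice $M_{2,2}$ is the exceptional lattice of the symplectic action of $(\mathbb Z/2\mathbb Z)^2$ on a K3 surface (the minimal primitive sublattice of the second cohomology of the resolved quotient containing the 12 exceptional curves). *)

From HB Require Import structures.
From mathcomp Require Import all_boot all_order all_algebra.
Set Implicit Arguments. Unset Strict Implicit. Unset Printing Implicit Defensive.
Import Order.TTheory GRing.Theory Num.Theory.
Local Open Scope ring_scope.

(* Ambient space Q^12 (row vectors); v_i is the i-th standard basis vector. *)
Notation vec := 'rV[rat]_12.

Definition bf (x y : vec) : rat := - 2 * (x *m y^T) 0 0.

Definition isZ (r : rat) : Prop := exists z : int, r = z%:~R.

(* h1 = (v1+...+v8)/2 (indices 0..7), h2 = (v5+...+v12)/2 (indices 4..11). *)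
Definition h1 : vec := \row_(j < 12) (if (j < 8)%N then 1/2 else 0).
Definition h2 : vec := \row_(j < 12) (if (4 <= j)%N then 1/2 else 0).

Definition inM (x : vec) : Prop :=
  exists (a : 'rV[int]_12) (c1 c2 : int),
    x = map_mx (fun z : int => z%:~R) a + c1%:~R *: h1 + c2%:~R *: h2.

Definition inDual (x : vec) : Prop := forall m, inM m -> isZ (bf x m).

(* Isometries of M_{2,2}, via their (unique) Q-linear extension to
   Q^12 = Q (x) M, acting on row vectors by x |-> x *m g. *)
Definition isometryM (g : 'M[rat]_12) : Prop :=
  [/\ g \in unitmx,
      (forall x y, bf (x *m g) (y *m g) = bf x y),
      (forall x, inM x -> inM (x *m g)) &
      (forall x, inM x -> exists y, inM y /\ y *m g = x)].

(* r ~ s in A_M : some psi in O(M) has bar(psi)(r + M) = s + M. *)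
Definition equivA (x y : vec) : Prop :=
  exists g, isometryM g /\ inM (x *m g - y).

Definition orderA (x : vec) (k : nat) : Prop :=
  [/\ (0 < k)%N, inM (k%:R *: x) &
      forall j : nat, (0 < j < k)%N -> ~ inM (j%:R *: x)].

(* q(x + M) = v in Q/2Z. *)
Definition qA (x : vec) (v : rat) : Prop := isZ ((bf x x - v) / 2).

(* A set P of elements of M^vee (saturated under congruence mod M) has
   exactly n classes mod M, i.e. defines a subset of A_M of cardinality n. *)
Definition cardA (P : vec -> Prop) (n : nat) : Prop :=
  exists s : 'I_n -> vec,
    [/\ (forall i, P (s i)),
        (forall i j, inM (s i - s j) -> i = j) &
        (forall x, P x -> exists i, inM (x - s i))].

Definition M22_table : seq (nat * rat * nat) :=
  [:: (2%N, 0, 54%N); (2%N, 0, 1%N); (2%N, 1/2, 64%N);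
      (2%N, 1, 54%N); (2%N, 1, 18%N); (2%N, 3/2, 64%N)].

From HB Require Import structures.
From mathcomp Require Import all_boot all_order all_algebra fingroup perm zify ring.
Import Order.TTheory GRing.Theory Num.Theory.
Set Implicit Arguments. Unset Strict Implicit. Unset Printing Implicit Defensive.
Local Open Scope ring_scope.

(* Every vector of the dual lattice is y/2 with y integral, and whether y/2 lies in M or in
   its dual only depends on the parity word of y: if C is the binary code spanned by
   1^8 0^4 and 0^4 1^8, then y/2 lies in M iff the parity word lies in C, and in the dual
   iff it lies in the orthogonal code, so that A_M is C^perp/C, of order 2^8. Coordinate
   permutations preserving C (the group S_4 wr S_3 permuting and reordering three blocks
   of four coordinates) are isometries of M. The orbits of six representatives under this
   group are computed explicitly: they have the announced sizes and cover the 255 non-zero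
   classes. No isometry of M merges two of them, since an isometry preserves q, the
   characteristic class (b(x, z) = q(z) mod 1 for every z in the dual) and the set of
   norms of a coset, and these three invariants separate the six representatives. *)

(** * Parity words of integral vectors *)

Definition oddz (z : int) : bool := ~~ (2 %| z)%Z.

Lemma oddzD a b : oddz (a + b) = oddz a (+) oddz b.
Proof. by rewrite /oddz; do 3 case: (_ %| _)%Z/idP; lia. Qed.

Lemma oddzM a b : oddz (a * b) = oddz a && oddz b.
Proof. by rewrite /oddz; do 3 case: (_ %| _)%Z/idP; nia. Qed.

Lemma oddzN a : oddz (- a) = oddz a.
Proof. by rewrite /oddz; case: (_ %| _)%Z/idP; case: (_ %| _)%Z/idP; lia. Qed.

Lemma oddzB a b : oddz (a - b) = oddz a (+) oddz b.
Proof. by rewrite oddzD oddzN. Qed.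

Lemma oddz_nat (m : nat) : oddz m = odd m.
Proof. by rewrite /oddz dvdzE dvdn2 negbK. Qed.

Lemma oddz_le_sqr a : (oddz a : nat)%:Z <= a * a.
Proof. by rewrite /oddz; case: (_ %| _)%Z/idP => /= ?; nia. Qed.

Lemma sqr_oddz_mod4 a : (a * a = (oddz a : nat)%:Z %[mod 4])%Z.
Proof. by rewrite /oddz; case: (_ %| _)%Z/idP => /= ?; nia. Qed.

Lemma isZ_int_num (r : rat) : isZ r <-> r \is a Num.int.
Proof. by split=> [[z ->] | /intrP]. Qed.

Lemma int_num_divr (R : archiNumFieldType) (z : int) (d : nat) : (0 < d)%N ->
  ((z%:~R : R) / d%:R \is a Num.int) = (d %| z)%Z.
Proof.
move=> d_gt0; have d_neq0 : d%:R != 0 :> R by rewrite pnatr_eq0 -lt0n.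
apply/idP/idP => [/intrP [m] | /dvdzP [m ->]].
  move/(congr1 ( *%R^~ d%:R)); rewrite divfK // -mulrz_nat -intrM => /intr_inj ->.
  by rewrite natz; exact: dvdz_mull (dvdzz _).
by rewrite intrM mulfK // intr_int.
Qed.

Lemma int_num_half (R : archiNumFieldType) (z : int) :
  ((z%:~R : R) / 2 \is a Num.int) = ~~ oddz z.
Proof. by rewrite int_num_divr // /oddz negbK. Qed.

Lemma oddz_sum (I : Type) (r : seq I) (F : I -> int) :
  oddz (\sum_(i <- r) F i) = \big[addb/false]_(i <- r) oddz (F i).
Proof. exact: (big_morph oddz oddzD). Qed.

Definition addw (p q : seq bool) : seq bool := [seq x.1 (+) x.2 | x <- zip p q].
Definition meetw (p q : seq bool) : seq bool := [seq x.1 && x.2 | x <- zip p q].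
Definition weight (p : seq bool) : nat := count id p.
Definition dotw (p q : seq bool) : bool := odd (weight (meetw p q)).
Definition permw (p : seq bool) (t : seq nat) : seq bool := map (nth false p) t.

Lemma addwC p q : addw p q = addw q p.
Proof. by rewrite /addw; elim: p q => [|a p IHp] [|b q] //=; rewrite IHp addbC. Qed.

Lemma size_permw p t : size (permw p t) = size t.
Proof. exact: size_map. Qed.

Section ParityVectors.
Variable n : nat.
Implicit Types (a b y : 'rV[int]_n) (p q : seq bool).

Definition ratv a : 'rV[rat]_n := map_mx (fun z : int => z%:~R) a.
Definition halfv y : 'rV[rat]_n := 2^-1 *: ratv y.
Definition parity y : seq bool := [seq oddz (y 0 j) | j <- enum 'I_n].
Definition indicator p : 'rV[int]_n := \row_j (nth false p j : nat)%:Z.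

Lemma halfvE y j : halfv y 0 j = (y 0 j)%:~R / 2.
Proof. by rewrite !mxE mulrC. Qed.

Lemma halfv_inj : injective halfv.
Proof.
move=> a b eq_ab; apply/rowP => j.
have := congr1 (fun v : 'rV[rat]_n => v 0 j * 2) eq_ab.
by rewrite /= !halfvE !divfK // => /intr_inj.
Qed.

Lemma halfvD a b : halfv (a + b) = halfv a + halfv b.
Proof. by rewrite /halfv /ratv map_mxD scalerDr. Qed.

Lemma halfvB a b : halfv (a - b) = halfv a - halfv b.
Proof. by rewrite /halfv /ratv map_mxB scalerBr. Qed.

Lemma halfv_mul2 a : halfv (a *+ 2) = ratv a.
Proof. by apply/rowP => j; rewrite halfvE !mxE intrD; field. Qed.

Lemma size_parity y : size (parity y) = n.
Proof. by rewrite size_map size_enum_ord. Qed.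

Lemma nth_parity y (j : 'I_n) : nth false (parity y) j = oddz (y 0 j).
Proof. by rewrite (nth_map j) ?size_enum_ord // nth_ord_enum. Qed.

Lemma count_enum_ord (F : 'I_n -> bool) :
  (count F (enum 'I_n))%:Z = \sum_j (F j : nat)%:Z.
Proof.
rewrite -sumn_count sumnE big_map enumT -natz natr_sum.
by apply: eq_bigr => j _; rewrite natz.
Qed.

Lemma weight_parity y : (weight (parity y))%:Z = \sum_j (oddz (y 0 j) : nat)%:Z.
Proof. by rewrite /weight count_map count_enum_ord. Qed.

Lemma parityD a b : parity (a + b) = addw (parity a) (parity b).
Proof. by rewrite /addw zip_map -map_comp; apply: eq_map => j; rewrite /= mxE oddzD. Qed.

Lemma parityB a b : parity (a - b) = addw (parity a) (parity b).
Proof. by rewrite /addw zip_map -map_comp; apply: eq_map => j; rewrite /= !mxE oddzB. Qed.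

Lemma parity_mul2D a b : parity (a *+ 2 + b) = parity b.
Proof. by apply: eq_map => j; rewrite !mxE !oddzD addbb. Qed.

Lemma parity_eq y y' : parity y = parity y' -> exists a, y = a *+ 2 + y'.
Proof.
move=> eq_yy'; exists (\row_j divz (y 0 j - y' 0 j) 2); apply/rowP => j.
have := congr1 (nth false ^~ (j : nat)) eq_yy'; rewrite /= !nth_parity !mxE => eq_odd.
have : y 0 j - y' 0 j \in dvdz 2 by rewrite -[_ \in _]negbK -/(oddz _) oddzB eq_odd addbb.
by case/dvdzP => k ek; rewrite ek mulzK //; apply/eqP; rewrite -subr_eq ek mulr_natr.
Qed.

Lemma parity_indicator p : size p = n -> parity (indicator p) = p.
Proof.
move=> size_p; apply: (@eq_from_nth _ false); rewrite size_parity // => k lt_kn.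
by rewrite (nth_parity _ (Ordinal lt_kn)) mxE oddz_nat; case: nth.
Qed.

Lemma oddz_dot a b : oddz (\sum_j a 0 j * b 0 j) = dotw (parity a) (parity b).
Proof.
rewrite /dotw /weight /meetw /parity zip_map -map_comp count_map -oddz_nat.
rewrite count_enum_ord !oddz_sum; apply: eq_bigr => j _.
by rewrite /= oddzM oddz_nat oddb.
Qed.

Lemma dot_indicator p q : size p = n -> size q = n ->
  \sum_j indicator p 0 j * indicator q 0 j = (weight (meetw p q))%:Z.
Proof.
move=> size_p size_q.
rewrite -{2}(parity_indicator size_p) -{2}(parity_indicator size_q).
rewrite /weight /meetw /parity zip_map -map_comp count_map count_enum_ord.
by apply: eq_bigr => j _; rewrite /= !mxE !oddz_nat; do 2 case: nth.
Qed.

Lemma weight_parity_le y : (weight (parity y))%:Z <= \sum_j y 0 j * y 0 j.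
Proof. by rewrite weight_parity; apply: ler_sum => j _; apply: oddz_le_sqr. Qed.

Lemma sum_sqr_mod4 y : (\sum_j y 0 j * y 0 j = (weight (parity y))%:Z %[mod 4])%Z.
Proof.
rewrite weight_parity; apply: (big_ind2 (fun u v => (u = v %[mod 4])%Z)) => //.
  by move=> u1 u2 v1 v2; lia.
by move=> j _; apply: sqr_oddz_mod4.
Qed.

Lemma halfv_col_perm (s : 'S_n) y : halfv (col_perm s y) = col_perm s (halfv y).
Proof. by apply/rowP => j; rewrite !mxE. Qed.

End ParityVectors.

Arguments indicator {n} p.

Section CoordinatePermutation.
Variables (n : nat) (t : seq nat).
Hypothesis t_perm : perm_eq t (iota 0 n).

Lemma size_perm_iota : size t = n.
Proof. by rewrite (perm_size t_perm) size_iota. Qed.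

Lemma nth_perm_iota_lt (j : 'I_n) : (nth 0 t j < n)%N.
Proof.
have : nth 0 t j \in t by rewrite mem_nth // size_perm_iota.
by rewrite (perm_mem t_perm) mem_iota.
Qed.

Definition coord_fun (j : 'I_n) : 'I_n := Ordinal (nth_perm_iota_lt j).

Lemma coord_fun_inj : injective coord_fun.
Proof.
move=> j k /(congr1 val) /= /eqP.
rewrite nth_uniq ?size_perm_iota // ?(perm_uniq t_perm) ?iota_uniq // => /eqP.
exact: val_inj.
Qed.

Definition coord_perm : 'S_n := perm coord_fun_inj.

Lemma col_coord_permE (T : Type) (x : 'rV[T]_n) j :
  col_perm coord_perm x 0 j = x 0 (coord_fun j).
Proof. by rewrite mxE permE. Qed.

Lemma parity_col_perm (y : 'rV[int]_n) :
  parity (col_perm coord_perm y) = permw (parity y) t.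
Proof.
apply: (@eq_from_nth _ false); first by rewrite size_parity size_map size_perm_iota.
move=> k; rewrite size_parity => lt_kn.
rewrite (nth_parity _ (Ordinal lt_kn)) col_coord_permE (nth_map 0%N) ?size_perm_iota //.
by rewrite -[nth 0%N t k]/(nat_of_ord (coord_fun (Ordinal lt_kn))) nth_parity.
Qed.

Lemma permw_inj p q : size p = n -> size q = n -> permw p t = permw q t -> p = q.
Proof.
move=> size_p size_q eq_pq; apply: (@eq_from_nth _ false); rewrite ?size_p ?size_q //.
move=> k lt_kn.
have k_t : k \in t by rewrite (perm_mem t_perm) mem_iota.
have := congr1 (nth false ^~ (index k t)) eq_pq.
by rewrite /= !(nth_map 0%N) ?index_mem // nth_index.
Qed.

Lemma indicator_col_perm (p : seq bool) : size p = n ->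
  col_perm coord_perm (indicator p) = indicator (permw p t).
Proof.
move=> size_p; apply/rowP => j.
by rewrite col_coord_permE !mxE (nth_map 0%N) ?size_perm_iota.
Qed.

End CoordinatePermutation.

(** * The lattice M_{2,2}, its dual and its isometries *)

Lemma bfE x y : bf x y = -2 * \sum_j x 0 j * y 0 j.
Proof. by rewrite /bf mxE; congr (_ * _); apply: eq_bigr => j _; rewrite mxE. Qed.

Lemma bfC x y : bf x y = bf y x.
Proof. by rewrite !bfE; congr (_ * _); apply: eq_bigr => j _; rewrite mulrC. Qed.

Lemma bfDl x y z : bf (x + y) z = bf x z + bf y z.
Proof. by rewrite /bf mulmxDl mxE mulrDr. Qed.

Lemma bfDr x y z : bf x (y + z) = bf x y + bf x z.
Proof. by rewrite bfC bfDl !(bfC x). Qed.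

Lemma bfNl x y : bf (- x) y = - bf x y.
Proof. by rewrite /bf mulNmx mxE mulrN. Qed.

Lemma bfBl x y z : bf (x - y) z = bf x z - bf y z.
Proof. by rewrite bfDl bfNl. Qed.

Lemma bf_halfv a b : bf (halfv a) (halfv b) = - (\sum_j a 0 j * b 0 j)%:~R / 2.
Proof.
rewrite bfE rmorph_sum mulr_sumr mulNr mulr_suml -sumrN; apply: eq_bigr => j _.
by rewrite !halfvE rmorphM /=; field.
Qed.

Lemma bf_col_perm (s : 'S_12) x y : bf (col_perm s x) (col_perm s y) = bf x y.
Proof.
rewrite !bfE [in RHS](reindex_inj (@perm_inj _ s)); congr (_ * _).
by apply: eq_bigr => j _; rewrite !mxE.
Qed.

Lemma int_num_bf_halfv a b : (bf (halfv a) (halfv b) \is a Num.int) = ~~ dotw (parity a) (parity b).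
Proof. by rewrite bf_halfv mulNr rpredN int_num_half oddz_dot. Qed.

(* [codeword b1 b2] is the parity word of 2 (b1 h1 + b2 h2). *)
Definition codeword (b1 b2 : bool) : seq bool :=
  [seq (b1 && (k < 8)%N) (+) (b2 && (4 <= k)%N) | k <- iota 0 12].
Definition code : seq (seq bool) :=
  [seq codeword b.1 b.2 | b <- [:: (false, false); (true, false); (false, true); (true, true)]].
Definition dual_word (p : seq bool) : bool := all (fun c => ~~ dotw p c) code.
Definition coset_eq (p q : seq bool) : bool := addw p q \in code.

Lemma codeword_in_code b1 b2 : codeword b1 b2 \in code.
Proof. by case: b1; case: b2; rewrite !inE eqxx ?orbT. Qed.

Lemma codeP p : p \in code -> exists b1 b2, p = codeword b1 b2.
Proof. by rewrite !inE => /or4P [] /eqP ->; do 2 eexists. Qed.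

Lemma size_code c : c \in code -> size c = 12%N.
Proof. by rewrite !inE => /or4P [] /eqP ->. Qed.

Lemma code_self_dual : all dual_word code.
Proof. by vm_compute. Qed.

Lemma code_weight_mod4 c : c \in code -> (4 %| weight c)%N.
Proof. by rewrite !inE => /or4P [] /eqP ->. Qed.

Definition glue (c1 c2 : int) : 'rV[int]_12 := \row_j (c1 * (j < 8)%N + c2 * (4 <= j)%N).

Lemma halfv_glue c1 c2 : halfv (glue c1 c2) = c1%:~R *: h1 + c2%:~R *: h2.
Proof.
apply/rowP => j; rewrite halfvE !mxE.
by case: (j < 8)%N; case: (4 <= j)%N; rewrite /= !(rmorphD, rmorphM) /=; field.
Qed.

Lemma parity_glue c1 c2 : parity (glue c1 c2) = codeword (oddz c1) (oddz c2).
Proof.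
apply: (@eq_from_nth _ false); rewrite size_parity ?size_map ?size_iota // => k lt_k12.
rewrite (nth_parity _ (Ordinal lt_k12)) mxE (nth_map 0%N) ?size_iota // nth_iota //.
by rewrite oddzD !oddzM !oddz_nat !oddb.
Qed.

Lemma inM_glue x : inM x <-> exists a c1 c2, x = halfv (a *+ 2 + glue c1 c2).
Proof.
by split=> [] [a [c1 [c2 ->]]]; exists a, c1, c2; rewrite halfvD halfv_mul2 halfv_glue addrA.
Qed.

Lemma inM_halfv y : inM (halfv y) <-> parity y \in code.
Proof.
split=> [/inM_glue [a [c1 [c2 /halfv_inj ->]]] | ].
  by rewrite parity_mul2D parity_glue codeword_in_code.
case/codeP=> b1 [b2 py].
have [a ->] : exists a, y = a *+ 2 + glue b1 b2.
  by apply: parity_eq; rewrite py parity_glue !oddz_nat !oddb.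
by apply/inM_glue; exists a, b1, b2.
Qed.

Lemma inM_halfvP x : inM x -> exists2 y, x = halfv y & parity y \in code.
Proof.
move=> /[dup] Mx /inM_glue [a [c1 [c2 ex]]].
by exists (a *+ 2 + glue c1 c2) => //; apply/inM_halfv; rewrite -ex.
Qed.

Lemma inM_ratv (a : 'rV[int]_12) : inM (ratv a).
Proof. by exists a, 0, 0; rewrite mulr0z !scale0r !addr0. Qed.

Lemma inMD x y : inM x -> inM y -> inM (x + y).
Proof.
case=> a [c1 [c2 ->]] [a' [c1' [c2' ->]]]; exists (a + a'), (c1 + c1'), (c2 + c2').
by apply/rowP => j; rewrite !mxE !rmorphD /=; ring.
Qed.

Lemma inMN x : inM x -> inM (- x).
Proof.
case=> a [c1 [c2 ->]]; exists (- a), (- c1), (- c2).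
by apply/rowP => j; rewrite !mxE !rmorphN /=; ring.
Qed.

Lemma inMB x y : inM x -> inM y -> inM (x - y).
Proof. by move=> Mx My; apply: inMD => //; apply: inMN. Qed.

Lemma inM0 : inM 0.
Proof. by have := inMB (inM_ratv 0) (inM_ratv 0); rewrite subrr. Qed.

Lemma inM_even m : inM m -> bf m m / 2 \is a Num.int.
Proof.
case/inM_halfvP=> y -> /code_weight_mod4 w4.
rewrite bf_halfv (_ : _ / 2 = - ((\sum_j y 0 j * y 0 j)%:~R / 4%:R)); last by field.
rewrite rpredN int_num_divr //; apply/dvdz_mod0P.
by move: (sum_sqr_mod4 y) w4; lia.
Qed.

Lemma inDual_halfv y : inDual (halfv y) <-> dual_word (parity y).
Proof.
split=> [dual_y | dual_py m].
  apply/allP => c c_code; have size_c := size_code c_code.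
  rewrite -(parity_indicator size_c) -int_num_bf_halfv -isZ_int_num.
  by apply/dual_y/inM_halfv; rewrite parity_indicator.
case/inM_halfvP=> y' -> code_y'; apply/isZ_int_num; rewrite int_num_bf_halfv.
by move/allP: dual_py; apply.
Qed.

Lemma bf_delta x j : bf x (ratv (delta_mx 0 j)) = -2 * x 0 j.
Proof.
rewrite bfE (bigD1 j) //= big1 ?addr0 => [|k /negbTE nkj]; rewrite !mxE ?eqxx ?nkj //=.
  by rewrite mulr1.
by rewrite mulr0.
Qed.

Lemma inDual_halfvE x : inDual x -> exists y, x = halfv y.
Proof.
move=> dual_x; exists (\row_j Num.floor (x 0 j * 2)); apply/rowP => j.
have : bf x (ratv (delta_mx 0 j)) \is a Num.int by apply/isZ_int_num/dual_x/inM_ratv.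
rewrite bf_delta mulNr rpredN mulrC intrEfloor => /eqP x2.
by rewrite halfvE mxE x2 mulfK.
Qed.

Lemma inM_inDual m : inM m -> inDual m.
Proof.
case/inM_halfvP=> y -> code_y; apply/inDual_halfv.
by move/allP: code_self_dual; apply.
Qed.

Lemma isometryM_inv g : isometryM g -> isometryM (invmx g).
Proof.
case=> unit_g bf_g M_g M_g_onto; split.
- by rewrite unitmx_inv.
- by move=> x y; rewrite -bf_g !mulmxKV.
- by move=> x /M_g_onto [y [My <-]]; rewrite mulmxK.
- by move=> x Mx; exists (x *m g); rewrite mulmxK //; split=> //; apply: M_g.
Qed.

Lemma isometryM_mul g h : isometryM g -> isometryM h -> isometryM (g *m h).
Proof.
case=> unit_g bf_g M_g onto_g [unit_h bf_h M_h onto_h]; split.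
- by rewrite unitmx_mul unit_g unit_h.
- by move=> x y; rewrite !mulmxA bf_h bf_g.
- by move=> x Mx; rewrite mulmxA; apply/M_h/M_g.
- move=> x /onto_h [y [/onto_g [z [Mz <-]] <-]].
  by exists z; rewrite mulmxA.
Qed.

Lemma inDual_isometry g x : isometryM g -> inDual x -> inDual (x *m g).
Proof.
by case=> _ bf_g _ onto_g dual_x m /onto_g [y [My <-]]; rewrite bf_g; apply: dual_x.
Qed.

Lemma equivA_sym x y : equivA x y -> equivA y x.
Proof.
case=> g [iso_g M_xgy]; exists (invmx g); split; first exact: isometryM_inv.
have [unit_g _ _ _] := iso_g.
have [_ _ M_ginv _] := isometryM_inv iso_g.
by have := M_ginv _ (inMN M_xgy); rewrite mulNmx mulmxBl mulmxK // opprB.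
Qed.

Lemma equivA_trans x y z : equivA x y -> equivA y z -> equivA x z.
Proof.
case=> g [iso_g M_xgy] [h [iso_h M_yhz]]; exists (g *m h).
split; first exact: isometryM_mul.
have [_ _ M_h _] := iso_h.
by have := inMD (M_h _ M_xgy) M_yhz; rewrite mulmxBl mulmxA addrA subrK.
Qed.

Lemma equivA_shift x y z : equivA x y -> inM (y - z) -> equivA x z.
Proof.
case=> g [iso_g M_xgy] M_yz; exists g; split=> //.
by have := inMD M_xgy M_yz; rewrite addrA subrK.
Qed.

Lemma equivA_inM x y : equivA x y -> inM x -> inM y.
Proof.
case=> g [[_ _ M_g _] M_xgy] Mx.
by have := inMB (M_g _ Mx) M_xgy; rewrite opprB addrC subrK.
Qed.

Lemma equivA_inDual x y : equivA x y -> inDual x -> inDual y.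
Proof.
case=> g [iso_g /inM_inDual dual_xgy] /(inDual_isometry iso_g) dual_xg m Mm.
rewrite -[y](subKr (x *m g)) bfBl; apply/isZ_int_num/rpredB; apply/isZ_int_num.
  exact: dual_xg.
exact: dual_xgy.
Qed.

Definition code_perm (t : seq nat) : bool :=
  perm_eq t (iota 0 12) && all (fun c => permw c t \in code) code.

Section CodePermutation.
Variable t : seq nat.
Hypothesis t_code : code_perm t.

Let t_perm : perm_eq t (iota 0 12). Proof. by case/andP: t_code. Qed.
Let s := coord_perm t_perm.

Lemma permw_code c : c \in code -> permw c t \in code.
Proof. by case/andP: t_code => _ /allP; apply. Qed.

Lemma permw_code_onto c : c \in code -> exists2 c', c' \in code & c = permw c' t.
Proof.
(* An injective self-map of the finite code is onto. *)
have inj_t : {in code &, injective (permw^~ t)}.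
  by move=> p q /size_code p12 /size_code q12; apply: (permw_inj t_perm).
have uniq_img : uniq [seq permw c' t | c' <- code].
  by rewrite (map_inj_in_uniq inj_t); vm_compute.
have sub_img : {subset [seq permw c' t | c' <- code] <= code}.
  by move=> _ /mapP [c' c'_code ->]; apply: permw_code.
have [_ /(_ c) <-] := uniq_min_size uniq_img sub_img (eq_leq (size_map _ _)).
by case/mapP=> c' c'_code ->; exists c'.
Qed.

Lemma inM_col_perm x : inM x -> inM (col_perm s x).
Proof.
case/inM_halfvP=> y -> code_y; rewrite -halfv_col_perm; apply/inM_halfv.
by rewrite parity_col_perm permw_code.
Qed.

Lemma inM_col_permV x : inM x -> inM (col_perm s^-1 x).
Proof.
case/inM_halfvP=> y -> /permw_code_onto [c' c'_code py].
rewrite -halfv_col_perm; apply/inM_halfv.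
suff -> : parity (col_perm s^-1 y) = c' by [].
apply: (permw_inj t_perm); rewrite ?size_parity ?size_code //.
by rewrite -(parity_col_perm t_perm) -col_permM mulgV col_perm1.
Qed.

Lemma isometryM_code_perm : isometryM (perm_mx s^-1).
Proof.
split=> [||x Mx|x Mx]; first exact: unitmx_perm.
- by move=> x y; rewrite -!col_permE bf_col_perm.
- by rewrite -col_permE; apply: inM_col_perm.
exists (col_perm s^-1 x); split; first exact: inM_col_permV.
by rewrite -col_permE -col_permM mulgV col_perm1.
Qed.

Lemma equivA_permw p : size p = 12%N ->
  equivA (halfv (indicator p)) (halfv (indicator (permw p t))).
Proof.
move=> size_p; exists (perm_mx s^-1); split; first exact: isometryM_code_perm.
by rewrite -col_permE -halfv_col_perm indicator_col_perm // subrr; apply: inM0.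
Qed.

End CodePermutation.

(** * Invariants of the classes *)

Lemma equivA_q x y : equivA x y -> inDual y -> (bf y y - bf x x) / 2 \is a Num.int.
Proof.
case=> g [[_ bf_g _ _] M_m] dual_y; rewrite -(bf_g x x).
move: M_m; set m := _ - y => M_m; rewrite -[x *m g](subrK y) -/m; clearbody m.
rewrite !(bfDl, bfDr) (bfC y m) (_ : _ / 2 = - bf m y - bf m m / 2); last by field.
by rewrite rpredB ?rpredN ?inM_even // bfC; apply/isZ_int_num/dual_y.
Qed.

Definition characteristicA (x : vec) : Prop :=
  forall z, inDual z -> bf z z - bf x z \is a Num.int.

Lemma characteristicA_equivA x y : equivA x y -> characteristicA x -> characteristicA y.
Proof.
case=> g [iso_g M_m] char_x z dual_z.
have [unit_g bf_g _ _] := iso_g.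
set z' := z *m invmx g; have ez : z = z' *m g by rewrite mulmxKV.
have -> : bf z z - bf y z = (bf z' z' - bf x z') + bf (x *m g - y) z.
  by rewrite bfBl -(bf_g z' z') -(bf_g x z') -ez; ring.
rewrite rpredD //; first exact/char_x/(inDual_isometry (isometryM_inv iso_g)).
by apply/isZ_int_num; rewrite bfC; apply: dual_z.
Qed.

Definition coset_has_norm (x : vec) (v : rat) : Prop := exists2 m, inM m & bf (x + m) (x + m) = v.

Lemma coset_has_norm_equivA x y v : equivA x y -> coset_has_norm x v -> coset_has_norm y v.
Proof.
case=> g [[_ bf_g M_g _] M_xgy] [m Mm <-]; exists (x *m g - y + m *m g).
  by apply: inMD => //; apply: M_g.
by rewrite addrA subrKC -mulmxDl bf_g.
Qed.

Lemma coset_has_norm_le p k v : size p = 12%N ->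
    all (fun c => k <= weight (addw p c))%N code ->
  coset_has_norm (halfv (indicator p)) v -> v <= - k%:R / 2.
Proof.
move=> size_p /allP min_k [m /inM_halfvP [y -> code_y] <-].
set z := indicator p + y.
have k_le : k%:Z <= \sum_j z 0 j * z 0 j.
  by apply: le_trans (weight_parity_le z); rewrite lez_nat parityD parity_indicator ?min_k.
by rewrite -halfvD bf_halfv ler_pM2r ?invr_gt0 // lerN2 -mulrz_nat ler_int natz.
Qed.

Lemma characteristicA_ones : characteristicA (halfv (const_mx 1)).
Proof.
move=> z /inDual_halfvE [y ->]; rewrite !bf_halfv.
have -> : \sum_j (const_mx 1 : 'rV[int]_12) 0 j * y 0 j = \sum_j y 0 j.
  by apply: eq_bigr => j _; rewrite mxE mul1r.
rewrite (_ : _ - _ = (\sum_j (y 0 j - y 0 j * y 0 j))%:~R / 2); last first.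
  by rewrite sumrB rmorphB /=; field.
rewrite int_num_half oddz_sum big1 // => j _.
by rewrite oddzB oddzM andbb addbb.
Qed.

(** * The six classes *)

Definition support (s : seq nat) : seq bool := [seq k \in s | k <- iota 0 12].

Definition rep_supports : seq (seq nat) :=
  [:: [:: 0; 1; 4; 5]; iota 0 12; [:: 0; 4; 8]; [:: 0; 1; 4; 5; 8; 9]; [:: 0; 1];
      [:: 0; 4; 8; 9; 10]]%N.

Definition rep_word (i : nat) : seq bool := support (nth [::] rep_supports i).

Definition rep (i : nat) : vec := halfv (indicator (rep_word i)).

(* (0 1) and (0 1 2 3) inside the first block of four coordinates, the swap of the first
   two blocks and the cyclic shift of the three blocks: they generate S_4 wr S_3 = Aut C. *)
Definition aut_gens : seq (seq nat) :=
  [:: [:: 1; 0; 2; 3; 4; 5; 6; 7; 8; 9; 10; 11];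
      [:: 1; 2; 3; 0; 4; 5; 6; 7; 8; 9; 10; 11];
      [:: 4; 5; 6; 7; 0; 1; 2; 3; 8; 9; 10; 11];
      [:: 4; 5; 6; 7; 8; 9; 10; 11; 0; 1; 2; 3]]%N.

(* One breadth-first round: compose each permutation with each generator and keep the
   result when it reaches a new class of p + C. Nine rounds reach the fixed point; the
   orbits are certified by the checks below, independently of this search. *)
Definition orbit_step (p : seq bool) (ts : seq (seq nat)) : seq (seq nat) :=
  let new_class acc t := ~~ has (fun u => coset_eq (permw p u) (permw p t)) acc in
  let add acc t := if new_class acc t then rcons acc t else acc in
  foldl add ts [seq map (nth 0%N t) g | t <- ts, g <- aut_gens].

Definition rep_orbit (i : nat) : seq (seq nat) := iter 9 (orbit_step (rep_word i)) [:: iota 0 12].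
Arguments rep_orbit : simpl never.

Fixpoint words (n : nat) : seq (seq bool) :=
  if n is k.+1 then [seq false :: p | p <- words k] ++ [seq true :: p | p <- words k]
  else [:: [::]].

Lemma mem_words p : p \in words (size p).
Proof.
elim: p => [|b p IHp] //=; rewrite mem_cat.
by case: b; rewrite (map_f _ IHp) ?orbT.
Qed.

Lemma all_iota (P : pred nat) n : all P (iota 0 n) -> forall i, (i < n)%N -> P i.
Proof. by move/allP=> all_P i lt_in; apply: all_P; rewrite mem_iota. Qed.

Lemma rep_words_ok :
  all (fun i => dual_word (rep_word i) && (rep_word i \notin code)) (iota 0 6).
Proof. by vm_compute. Qed.

Lemma rep_orbits_ok : all (fun i => all code_perm (rep_orbit i) &&
    pairwise (fun t u => ~~ coset_eq (permw (rep_word i) t) (permw (rep_word i) u))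
      (rep_orbit i)) (iota 0 6).
Proof. by vm_compute. Qed.

(* The [let] makes the VM compute the six orbits once rather than once per word. *)
Lemma rep_orbits_cover :
  let orbits := [seq [seq permw (rep_word i) t | t <- rep_orbit i] | i <- iota 0 6] in
  all (fun q => dual_word q && (q \notin code) ==> has (has (coset_eq ^~ q)) orbits) (words 12).
Proof. by vm_compute. Qed.

Lemma rep_table : all (fun i => let: (k, v, N) := nth (0%N, 0, 0%N) M22_table i in
    [&& k == 2%N,
        (- (weight (meetw (rep_word i) (rep_word i)))%:R / 2 - v) / 2 \is a Num.int
      & size (rep_orbit i) == N]) (iota 0 6).
Proof. by vm_compute. Qed.

Lemma size_rep_word i : size (rep_word i) = 12%N.
Proof. by rewrite size_map size_iota. Qed.

Lemma bf_rep i j :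
  bf (rep i) (rep j) = - (weight (meetw (rep_word i) (rep_word j)))%:R / 2.
Proof. by rewrite bf_halfv dot_indicator ?size_rep_word. Qed.

Lemma rep_inDual i : (i < 6)%N -> inDual (rep i).
Proof.
move=> /(all_iota rep_words_ok) /andP [dual_i _].
by apply/inDual_halfv; rewrite parity_indicator ?size_rep_word.
Qed.

Lemma rep_notin_M i : (i < 6)%N -> ~ inM (rep i).
Proof.
move=> /(all_iota rep_words_ok) /andP [_ /negP ncode_i] /inM_halfv.
by rewrite parity_indicator ?size_rep_word.
Qed.

Lemma orderA_rep i : (i < 6)%N -> orderA (rep i) 2.
Proof.
move=> lt_i6; split=> // [|j /andP [j_gt0 j_lt2]].
  by rewrite /rep /halfv scalerA mulfV // scale1r; apply: inM_ratv.
have -> : j = 1%N by lia.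
by rewrite scale1r; apply: rep_notin_M.
Qed.

Lemma rep_orbit_code_perm i t : (i < 6)%N -> t \in rep_orbit i -> code_perm t.
Proof. by move=> /(all_iota rep_orbits_ok) /andP [/allP code_perms _]; apply: code_perms. Qed.

Lemma size_rep_orbit_perm i t : (i < 6)%N -> t \in rep_orbit i -> size t = 12%N.
Proof.
by move=> lt_i6 /(rep_orbit_code_perm lt_i6) /andP [/perm_size -> _]; rewrite size_iota.
Qed.

Lemma rep_equivA_orbit i t : (i < 6)%N -> t \in rep_orbit i ->
  equivA (rep i) (halfv (indicator (permw (rep_word i) t))).
Proof.
move=> lt_i6 t_orbit.
exact (equivA_permw (rep_orbit_code_perm lt_i6 t_orbit) (size_rep_word i)).
Qed.

Lemma rep_orbits_coverP x : inDual x -> ~ inM x ->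
  exists i t, [/\ (i < 6)%N, t \in rep_orbit i
                & inM (halfv (indicator (permw (rep_word i) t)) - x)].
Proof.
move=> dual_x notM_x; have [y ex] := inDual_halfvE dual_x.
have dual_y : dual_word (parity y) by apply/inDual_halfv; rewrite -ex.
have ncode_y : parity y \notin code by apply/negP => /inM_halfv; rewrite -ex.
have words_y : parity y \in words 12 by have := mem_words (parity y); rewrite size_parity.
have := allP rep_orbits_cover _ words_y; rewrite dual_y ncode_y.
case/hasP=> _ /mapP [i i_iota ->] /hasP [_ /mapP [t t_orbit ->] coset_t].
rewrite mem_iota in i_iota; exists i, t; split=> //.
rewrite ex -halfvB; apply/inM_halfv.
by rewrite parityB parity_indicator // size_permw (size_rep_orbit_perm i_iota t_orbit).
Qed.

Lemma rep_weight_mod4 i j : (i < 6)%N -> (j < 6)%N -> equivA (rep i) (rep j) ->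
  weight (meetw (rep_word i) (rep_word i)) = weight (meetw (rep_word j) (rep_word j)) %[mod 4].
Proof.
move=> lt_i6 lt_j6 /equivA_q /(_ (rep_inDual lt_j6)); rewrite !bf_rep.
move: (weight (meetw (rep_word i) _)) (weight (meetw (rep_word j) _)) => wi wj.
rewrite (_ : _ / 2 = (wi%:Z - wj%:Z)%:~R / 4%:R); last first.
  by rewrite rmorphB /= -!natz !mulrz_nat; field.
by rewrite int_num_divr // => /dvdz_mod0P; lia.
Qed.

Lemma characteristicA_rep1 : characteristicA (rep 1).
Proof.
rewrite /rep; have -> : indicator (rep_word 1) = const_mx 1 :> 'rV[int]_12.
  apply/rowP => j; rewrite !mxE (nth_map 0%N) ?size_iota // nth_iota //.
  by rewrite -[nth [::] rep_supports 1]/(iota 0 12) mem_iota ltn_ord.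
exact: characteristicA_ones.
Qed.

Lemma not_characteristicA_rep0 : ~ characteristicA (rep 0).
Proof. by move/(_ _ (rep_inDual (isT : 2 < 6)%N)); rewrite !bf_rep; vm_compute. Qed.

Lemma coset_has_norm_rep4 : coset_has_norm (rep 4) (-1).
Proof. by exists 0; [apply: inM0 | rewrite addr0 bf_rep; vm_compute]. Qed.

Lemma not_coset_has_norm_rep3 : ~ coset_has_norm (rep 3) (-1).
Proof.
have min_weight : all (fun c => 3 <= weight (addw (rep_word 3) c))%N code by vm_compute.
by move/(coset_has_norm_le (size_rep_word 3) min_weight); vm_compute.
Qed.

Lemma rep_equivA_inj i j : (i < 6)%N -> (j < 6)%N -> equivA (rep i) (rep j) -> i = j.
Proof.
wlog le_ij : i j / (i <= j)%N => [wlog_le lt_i6 lt_j6 eq_ij | lt_i6 lt_j6 eq_ij].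
  case/orP: (leq_total i j) => [le_ij | le_ji]; first exact: wlog_le.
  by apply/esym/wlog_le => //; apply: equivA_sym.
have := rep_weight_mod4 lt_i6 lt_j6 eq_ij.
(* q leaves only the pairs (2,0,54)/(2,0,1) and (2,1,54)/(2,1,18). *)
case: i j le_ij lt_i6 lt_j6 eq_ij => [|[|[|[|[|[|i]]]]]] [|[|[|[|[|[|j]]]]]] //= _ _ _ eq_ij _.
  case: not_characteristicA_rep0.
  exact: characteristicA_equivA (equivA_sym eq_ij) characteristicA_rep1.
case: not_coset_has_norm_rep3.
exact: coset_has_norm_equivA (equivA_sym eq_ij) coset_has_norm_rep4.
Qed.

Lemma cardA_rep_class i : (i < 6)%N ->
  cardA (fun x => inDual x /\ equivA (rep i) x) (size (rep_orbit i)).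
Proof.
move=> lt_i6; have /andP [_ /(pairwiseP [::]) distinct] := all_iota rep_orbits_ok lt_i6.
pose s (k : 'I_(size (rep_orbit i))) : vec :=
  halfv (indicator (permw (rep_word i) (nth [::] (rep_orbit i) k))).
have orbit_k (k : 'I_(size (rep_orbit i))) : nth [::] (rep_orbit i) k \in rep_orbit i.
  exact: mem_nth.
have equiv_s k : equivA (rep i) (s k) by apply: rep_equivA_orbit.
exists s; split.
- by move=> k; split; [apply: equivA_inDual (equiv_s k) (rep_inDual lt_i6) |].
- move=> k l; rewrite -halfvB => /inM_halfv.
  rewrite parityB !parity_indicator ?size_permw ?(size_rep_orbit_perm lt_i6 (orbit_k _)) //.
  move=> coset_kl; have [lt_kl | lt_lk | /val_inj //] := ltngtP k l.
    by have := distinct k l (ltn_ord k) (ltn_ord l) lt_kl; rewrite /coset_eq coset_kl.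
  by have := distinct l k (ltn_ord l) (ltn_ord k) lt_lk; rewrite /coset_eq addwC coset_kl.
- move=> x [dual_x equiv_x].
  have notM_x : ~ inM x.
    by move=> Mx; apply: (rep_notin_M lt_i6); apply: equivA_inM (equivA_sym equiv_x) Mx.
  have [j [t [lt_j6 t_orbit Mtx]]] := rep_orbits_coverP dual_x notM_x.
  have equiv_jx := equivA_shift (rep_equivA_orbit lt_j6 t_orbit) Mtx.
  have eq_ji := rep_equivA_inj lt_j6 lt_i6 (equivA_trans equiv_jx (equivA_sym equiv_x)).
  subst j; have lt_idx : (index t (rep_orbit i) < size (rep_orbit i))%N by rewrite index_mem.
  by exists (Ordinal lt_idx); rewrite /s nth_index // -opprB; apply: inMN.
Qed.

Theorem proposition3p6 :
  exists r : 'I_6 -> 'rV[rat]_12,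
    [/\ (forall i, inDual (r i) /\ ~ inM (r i)),
        (forall x, inDual x -> ~ inM x -> exists i, equivA (r i) x),
        (forall i j, equivA (r i) (r j) -> i = j) &
        (forall i : 'I_6,
           let t := nth (0%N, 0, 0%N) M22_table i in
           [/\ orderA (r i) t.1.1, qA (r i) t.1.2 &
               cardA (fun x => inDual x /\ equivA (r i) x) t.2])].
Proof.
exists (fun i => rep i); split.
- by move=> i; split; [apply: rep_inDual | apply: rep_notin_M].
- move=> x dual_x notM_x; have [i [t [lt_i6 t_orbit Mtx]]] := rep_orbits_coverP dual_x notM_x.
  by exists (Ordinal lt_i6); apply: equivA_shift (rep_equivA_orbit lt_i6 t_orbit) Mtx.
- by move=> i j /rep_equivA_inj eq_ij; apply/val_inj/eq_ij.
move=> i; have := all_iota rep_table (ltn_ord i).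
case: (nth _ M22_table i) => [[k v] N] /and3P [/eqP -> q_rep /eqP <-] t; split.
- exact: orderA_rep.
- by apply/isZ_int_num; rewrite bf_rep.
- exact: cardA_rep_class.
Qed.
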